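(* Consider the consistent-read asynchronous iteration defined in the context with step size $\beta=1$, an arbitrary deterministic starting vector $x_0$, a nonnegative integer $\tau$, and deterministic delay indices $k(j)$ satisfying $j-\tau\le k(j)\le j$ for all $j$. Let $\rho=\frac1n\|A\|_\infty=\max_{l}\frac1n\sum_{r=1}^n|A_{lr}|$, and suppose $2\rho\tau<1$. Set $\nu_\tau=1-2\rho\tau$. Then: (a) For every integer $m\ge \frac{\log(1/2)}{\log(1-\lambda_{\max}/n)}$, \[E_m\le\Big(1-\frac{\nu_\tau}{2\kappa}\Big)E_0.\] (b) Let $T_0=\big\lceil \frac{\log(1/2)}{\log(1-\lambda_{\max}/n)}\big\rceil$, $T=T_0+\tau$, and \[\chi=\frac{\rho\tau^2\lambda_{\max}(1-\lambda_{\max}/n)^{-2\tau}}{n}.\] Then for every integer $r\ge1$ and every $m\ge rT$, \[E_m\le\Big(1-\frac{\nu_\tau}{2\kappa}\Big)\Big(1-\frac{\nu_\tau(1-\lambda_{\max}/n)^{\tau}}{2\kappa}+\chi\Big)^{r-1}E_0.\]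
   Context: Let $n\ge2$ and let $A\in\mathbb{R}^{n\times n}$ be symmetric positive definite with all diagonal entries equal to $1$; let $b\in\mathbb{R}^n$ and $x^\star=A^{-1}b$. Let $\lambda_{\min},\lambda_{\max}$ be the smallest and largest eigenvalues of $A$ and $\kappa=\lambda_{\max}/\lambda_{\min}$. Write $(x,y)_A=y^TAx$ and $\|x\|_A=\sqrt{(x,x)_A}$; $e^{(1)},\dots,e^{(n)}$ are the standard basis vectors. Consistent-read iteration: let $d_0,d_1,\dots$ be i.i.d. random vectors, each uniformly distributed on $\{e^{(1)},\dots,e^{(n)}\}$; let $\tau\ge0$ be an integer and $k(0),k(1),\dots$ deterministic integers (not depending on the $d_j$) with $j-\tau\le k(j)\le j$; given $x_0\in\mathbb{R}^n$ and a step size $\beta$, define for $j\ge0$ \[\gamma_j=(x^\star-x_{k(j)},d_j)_A,\qquad x_{j+1}=x_j+\beta\gamma_jd_j.\] (Note $\gamma_j=d_j^T(b-Ax_{k(j)})$.) Define $E_m=\mathbb{E}[\|x_m-x^\star\|_A^2]$. *)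

(* classical reals. Indices 0..n-1; vectors nat -> R; matrices nat -> nat -> R. *)
From Stdlib Require Import Reals Lra Lia ZArith.
Open Scope R_scope.

Fixpoint rsum (n : nat) (f : nat -> R) : R :=
  match n with
  | O => 0
  | S k => rsum k f + f k
  end.

Fixpoint rmax_upto (k : nat) (f : nat -> R) : R :=
  match k with
  | O => f O
  | S j => Rmax (rmax_upto j f) (f (S j))
  end.

Definition matvec (n : nat) (A : nat -> nat -> R) (v : nat -> R) (i : nat) : R :=
  rsum n (fun r => A i r * v r).

Definition inprodA (n : nat) (A : nat -> nat -> R) (x y : nat -> R) : R :=
  rsum n (fun i => y i * matvec n A x i).

Definition normA2 (n : nat) (A : nat -> nat -> R) (x : nat -> R) : R :=
  inprodA n A x x.

Definition ebasis (i : nat) : nat -> R := fun r => if Nat.eqb r i then 1 else 0.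

Definition is_eigenvalue (n : nat) (A : nat -> nat -> R) (lam : R) : Prop :=
  exists v : nat -> R, (exists i, (i < n)%nat /\ v i <> 0) /\
    forall i, (i < n)%nat -> matvec n A v i = lam * v i.

Definition norm_inf (n : nat) (A : nat -> nat -> R) : R :=
  rmax_upto (n - 1) (fun l => rsum n (fun r => Rabs (A l r))).

(* History of the consistent-read iteration driven by the index sequence s
   (d_j = e^(s j)).  hist ... j i = x_i for i <= j. *)
Fixpoint hist (n : nat) (A : nat -> nat -> R) (xstar x0 : nat -> R) (beta : R)
  (k : nat -> nat) (s : nat -> nat) (j : nat) : nat -> (nat -> R) :=
  match j with
  | O => fun _ => x0
  | S j' =>
      let H := hist n A xstar x0 beta k s j' in
      let xk := H (k j') in
      let d := ebasis (s j') in
      let gamma := inprodA n A (fun r => xstar r - xk r) d in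
      fun i => if Nat.leb i j' then H i
               else (fun r => H j' r + beta * gamma * d r)
  end.

Definition iterate (n : nat) (A : nat -> nat -> R) (xstar x0 : nat -> R) (beta : R)
  (k : nat -> nat) (s : nat -> nat) (m : nat) : nat -> R :=
  hist n A xstar x0 beta k s m m.

Definition upd (s : nat -> nat) (m i : nat) : nat -> nat :=
  fun j => if Nat.eqb j m then i else s j.

(* Expectation over i.i.d. uniform choices s 0, ..., s (m-1) in {0..n-1}:
   (1/n^m) * sum over all such sequences. *)
Fixpoint expect_seq (n m : nat) (F : (nat -> nat) -> R) : R :=
  match m with
  | O => F (fun _ => O)
  | S m' => / INR n * rsum n (fun i => expect_seq n m' (fun s => F (upd s m' i)))
  end.

Definition Em (n : nat) (A : nat -> nat -> R) (xstar x0 : nat -> R) (beta : R)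
  (k : nat -> nat) (m : nat) : R :=
  expect_seq n m (fun s =>
    normA2 n A (fun r => iterate n A xstar x0 beta k s m r - xstar r)).

Definition Rceil (x : R) : Z := (1 - up (- x))%Z.

From Stdlib Require Import Reals Lra Lia ZArith FunctionalExtensionality.
From mathcomp Require all_boot all_order all_algebra complex spectral Rstruct ring.
Open Scope R_scope.

(* Write e_j = x_j - x*, E_j = E ||e_j||_A^2 and R_a = E ||A e_a||^2.  Since
   A_pp = 1, drawing index p at time j gives
     ||e_(j+1)||_A^2 = ||e_j||_A^2 - 2 a_p b_p + a_p^2,  a = A e_(k j), b = A e_j.
   Averaging over p yields
   - a lower bound E_(j+1) >= q E_j with q = 1 - lmax/n (so the energy decays
     at most geometrically), and
   - an upper bound E_(j+1) <= E_j - R_(k j)/n + (lmax/n^2) (sum of R_(k l)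
     over the delay window), obtained by telescoping <a, b - a> over
     k j <= l < j, computing each increment in expectation over the index
     drawn at time l, and applying Young's inequality.
   Summing over a window [t, m) and using Gershgorin (lmax <= ||A||_oo < n)
   gives E_m <= E_t - (nu/n) S + (rho tau/n) P, where S collects residuals in
   the window (bounded below through R >= lmin E and the geometric lower bound)
   and P the at most tau residuals just before t (bounded above through
   R <= lmax E).  Part (a) is the window starting at 0; part (b) chains blocks
   of length T0 + tau. *)

(* Spectral theorem for a real symmetric matrix, in coordinates: the squared
   Euclidean norm, the A-norm and the squared norm of A x are the weighted sums
   sum c_j, sum d_j c_j, sum d_j^2 c_j of nonnegative weights c_j (squared
   coordinates of x in an orthonormal eigenbasis) against eigenvalues d_j. *)
Module SpectralCoordinates.
Import all_boot all_order all_algebra complex sesquilinear spectral Rstruct ring.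
Import Order.TTheory GRing.Theory Num.Theory.
Local Open Scope ring_scope.
Local Open Scope complex_scope.
Local Open Scope sesquilinear_scope.
Local Set Implicit Arguments.
Local Unset Strict Implicit.

Notation C := (complex R : numClosedFieldType).
Notation ReC := (@complex.Re R).
Notation ImC := (@complex.Im R).

Lemma rsumE n (f : nat -> R) : rsum n f = \sum_(i < n) f i.
Proof.
elim: n => [|n IH]; first by rewrite big_ord0.
by rewrite big_ord_recr /= IH.
Qed.

Lemma conj_real (x : R) : Num.conj (x%:C : C) = x%:C.
Proof. exact: conjc_real. Qed.

Lemma Re_sum n (F : 'I_n -> C) : ReC (\sum_(i < n) F i) = \sum_(i < n) ReC (F i).
Proof. elim/big_rec2: _ => [//|i y z _ <-]; by case: (F i); case: z. Qed.

Lemma Im_sum n (F : 'I_n -> C) : ImC (\sum_(i < n) F i) = \sum_(i < n) ImC (F i).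
Proof. elim/big_rec2: _ => [//|i y z _ <-]; by case: (F i); case: z. Qed.

Lemma ReM_real (a : R) (w : C) : ReC (a%:C * w) = a * ReC w.
Proof. by case: w => c d /=; rewrite mul0r subr0. Qed.

Lemma ImM_real (a : R) (w : C) : ImC (a%:C * w) = a * ImC w.
Proof. by case: w => c d /=; rewrite mul0r addr0. Qed.

Section UnitaryQuadraticForm.
Variable N : nat.
Variable P : 'M[C]_N.
Hypothesis P_unitary : P \is unitarymx.
Variable x : 'I_N -> R.

Definition coord j : C := \sum_r P j r * (x r)%:C.
Definition qform (Q : 'M[C]_N) : C := \sum_i \sum_r (x i)%:C * Q i r * (x r)%:C.

Lemma conj_coord j : Num.conj (coord j) = \sum_i Num.conj (P j i) * (x i)%:C.
Proof.
rewrite /coord rmorph_sum; apply: eq_bigr => i _.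
by rewrite rmorphM /= conj_real.
Qed.

Lemma qform_diag (f : 'rV[C]_N) :
  qform (P^t* *m diag_mx f *m P) = \sum_j f 0 j * (Num.conj (coord j) * coord j).
Proof.
rewrite /qform.
under eq_bigr => i _ do under eq_bigr => r _ do
  rewrite mul_mx_diag !mxE mulr_sumr mulr_suml.
under eq_bigr => i _ do rewrite exchange_big /=.
rewrite exchange_big /=; apply: eq_bigr => j _.
rewrite conj_coord /coord mulr_suml mulr_sumr; apply: eq_bigr => i _.
rewrite mulr_sumr mulr_sumr; apply: eq_bigr => r _.
rewrite !mxE; ring.
Qed.

Lemma qform_id : qform 1%:M = \sum_i (x i)%:C * (x i)%:C.
Proof.
rewrite /qform; apply: eq_bigr => i _.
rewrite (bigD1 i) //= mxE eqxx mulr1 big1 ?addr0 // => r /negPf ri.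
by rewrite mxE eq_sym ri mulr0 mul0r.
Qed.

Lemma id_unitary : (1%:M : 'M[C]_N) = P^t* *m diag_mx (const_mx 1) *m P.
Proof.
rewrite diag_const_mx mulmx1.
by have := mulmxKtV 1%:M P_unitary erefl; rewrite mul1mx.
Qed.
End UnitaryQuadraticForm.

Lemma is_eigenvalue_ord (n' : nat) (A : nat -> nat -> R) (u : 'I_n'.+1 -> R)
    (dl : R) (i0 : 'I_n'.+1) : u i0 != 0 ->
  (forall r : 'I_n'.+1, \sum_(i < n'.+1) (A r i * u i)%R = (dl * u r)%R) ->
  is_eigenvalue n'.+1 A dl.
Proof.
move=> u0 Hu; exists (fun t => u (inord t)); split.
  exists i0; split; first by apply/ssrnat.ltP; exact: ltn_ord.
  by rewrite inord_val; apply/eqP.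
move=> t /ssrnat.ltP Ht; rewrite /matvec rsumE.
have := Hu (inord t); rewrite inordK // => Hut.
etransitivity; last exact: Hut.
by apply: eq_bigr => i _; rewrite inord_val.
Qed.

Definition Amx (n' : nat) (A : nat -> nat -> R) : 'M[C]_n'.+1 :=
  \matrix_(i, j) (A i j)%:C.

Lemma Amx_herm (n' : nat) (A : nat -> nat -> R) :
  (forall i j : 'I_n'.+1, A i j = A j i) -> Amx n' A \is hermsymmx.
Proof.
move=> A_sym; apply: realsym_hermsym.
  apply/is_hermitianmxP; rewrite expr0 scale1r.
  by apply/matrixP => i j; rewrite !mxE A_sym.
by apply/mxOverP => i j; rewrite mxE; apply/complex_realP; exists (A i j).
Qed.

Section RealSymmetric.
Variable n' : nat.
Notation N := n'.+1.
Variable A : nat -> nat -> R.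
Hypothesis A_sym : forall i j : 'I_N, A i j = A j i.
Variable P : 'M[C]_N.
Variable D : 'rV[C]_N.
Hypothesis P_unitary : P \is unitarymx.
Hypothesis A_spectral : Amx n' A = P^t* *m diag_mx D *m P.
Hypothesis D_real : D \is a realmx.

Definition eigval (j : 'I_N) : R := ReC (D 0 j).

Lemma eigvalE j : (eigval j)%:C = D 0 j.
Proof. by apply: RRe_real; apply: (mxOverP D_real). Qed.

(* Each row of P is a (complex) eigenvector; its real or imaginary part is a
   nonzero real eigenvector, so every eigval j is an eigenvalue of A. *)
Lemma eigval_is_eigenvalue j : is_eigenvalue N A (eigval j).
Proof.
have PA : P *m Amx n' A = diag_mx D *m P.
  by rewrite A_spectral !mulmxA (unitarymxP P_unitary) mul1mx.
have Erow r : \sum_i P j i * Amx n' A i r = D 0 j * P j r.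
  by move/matrixP/(_ j r): PA; rewrite mul_diag_mx !mxE.
have ERe (r : 'I_N) : \sum_(i < N) (A r i * ReC (P j i))%R = (eigval j * ReC (P j r))%R.
  have := congr1 ReC (Erow r); rewrite Re_sum -eigvalE ReM_real => <-.
  by apply: eq_bigr => i _; rewrite mxE [in RHS]mulrC ReM_real A_sym.
have EIm (r : 'I_N) : \sum_(i < N) (A r i * ImC (P j i))%R = (eigval j * ImC (P j r))%R.
  have := congr1 ImC (Erow r); rewrite Im_sum -eigvalE ImM_real => <-.
  by apply: eq_bigr => i _; rewrite mxE [in RHS]mulrC ImM_real A_sym.
have [i0 Pi0] : exists i0, P j i0 != 0.
  have : (P *m P^t*) j j = 1 by rewrite (unitarymxP P_unitary) mxE eqxx.
  rewrite mxE; case: (pickP [pred i | P j i != 0]) => [i0 Hi0 _|P0]; first by exists i0.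
  rewrite big1 => [/eqP|i _]; first by rewrite eq_sym oner_eq0.
  by move/negbFE/eqP: (P0 i) => ->; rewrite mul0r.
move: Pi0 ERe EIm; case E0: (P j i0) => [a b] Hab ERe EIm.
case: (eqVneq a 0) => [a0|an0].
  apply: (@is_eigenvalue_ord n' A (fun i => ImC (P j i)) _ i0); last exact: EIm.
  by rewrite E0 /=; apply: contra Hab => /eqP b0; rewrite a0 b0.
apply: (@is_eigenvalue_ord n' A (fun i => ReC (P j i)) _ i0); last exact: ERe.
by rewrite E0.
Qed.

Variable x : 'I_N -> R.

Definition weight (j : 'I_N) : R :=
  (ReC (coord P x j) ^+ 2 + ImC (coord P x j) ^+ 2)%R.

Lemma weightE j : (weight j)%:C = Num.conj (coord P x j) * coord P x j.
Proof. by rewrite add_Re2_Im2 sqr_normc mulrC. Qed.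

Lemma weight_ge0 j : 0 <= weight j.
Proof. by rewrite addr_ge0 // sqr_ge0. Qed.

Lemma sum_sq_weights : \sum_i x i * x i = \sum_j weight j.
Proof.
apply: complexI; rewrite !rmorph_sum /=.
transitivity (qform x 1%:M).
  by rewrite qform_id; apply: eq_bigr => i _; rewrite rmorphM.
rewrite (id_unitary P_unitary) qform_diag; apply: eq_bigr => j _.
by rewrite mxE mul1r -weightE.
Qed.

Lemma Anorm_weights :
  \sum_(i < N) x i * (\sum_(r < N) A i r * x r) = \sum_j eigval j * weight j.
Proof.
apply: complexI; rewrite !rmorph_sum /=.
transitivity (qform x (Amx n' A)).
  rewrite /qform; apply: eq_bigr => i _.
  rewrite rmorphM rmorph_sum mulr_sumr /=; apply: eq_bigr => r _.
  by rewrite !rmorphM mxE mulrA.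
rewrite A_spectral qform_diag; apply: eq_bigr => j _.
by rewrite rmorphM -eigvalE -weightE.
Qed.

Lemma Asq_weights :
  \sum_(i < N) ((\sum_(r < N) A i r * x r) * (\sum_(r < N) A i r * x r)) =
  \sum_j (eigval j * eigval j * weight j).
Proof.
have AmAm : Amx n' A *m Amx n' A = P^t* *m diag_mx (\row_j (D 0 j * D 0 j)) *m P.
  rewrite A_spectral -!mulmxA (mulmxA P) (unitarymxP P_unitary) mul1mx.
  by rewrite (mulmxA (diag_mx D)) mulmx_diag mulmxA.
apply: complexI; rewrite !rmorph_sum /=.
transitivity (qform x (Amx n' A *m Amx n' A)).
  rewrite /qform.
  under [RHS]eq_bigr => i _ do under eq_bigr => r _ do rewrite mxE mulr_sumr mulr_suml.
  under eq_bigr => s _ do rewrite rmorphM !rmorph_sum mulr_suml.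
  under eq_bigr => s _ do under eq_bigr => i _ do rewrite mulr_sumr.
  rewrite exchange_big /=; apply: eq_bigr => i _; rewrite exchange_big /=.
  apply: eq_bigr => r _; apply: eq_bigr => s _.
  rewrite !mxE !rmorphM (A_sym s i); ring.
rewrite AmAm qform_diag; apply: eq_bigr => j _.
by rewrite mxE !rmorphM -eigvalE -weightE.
Qed.
End RealSymmetric.

Local Open Scope R_scope.

Lemma spectral_coordinates_ord (n' : nat) (A : nat -> nat -> R) (lmin lmax : R) :
  (forall i j : 'I_n'.+1, A i j = A j i) ->
  (forall lam, is_eigenvalue n'.+1 A lam -> lmin <= lam <= lmax) ->
  forall x : nat -> R, exists c d : nat -> R,
    (forall j, 0 <= c j /\ lmin <= d j <= lmax) /\
    rsum n'.+1 (fun i => x i * x i) = rsum n'.+1 c /\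
    normA2 n'.+1 A x = rsum n'.+1 (fun j => d j * c j) /\
    rsum n'.+1 (fun i => matvec n'.+1 A x i * matvec n'.+1 A x i) =
      rsum n'.+1 (fun j => d j * d j * c j).
Proof.
move=> A_sym spec x.
pose P := spectralmx (Amx n' A); pose D := spectral_diag (Amx n' A).
have Aherm := Amx_herm A_sym.
have P_unitary : P \is unitarymx := spectral_unitarymx _.
have A_spectral : Amx n' A = P^t* *m diag_mx D *m P.
  by move/orthomx_spectralP: (hermitian_normalmx Aherm); rewrite invmx_unitary.
have D_real : D \is a realmx := hermitian_spectral_diag_real Aherm.
pose xo := fun i : 'I_n'.+1 => x i.
exists (fun j => weight P xo (inord j)), (fun j => eigval D (inord j)).
split.
  move=> j; split; first by apply/RleP; exact: weight_ge0.
  exact/spec/(eigval_is_eigenvalue A_sym P_unitary A_spectral D_real).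
rewrite /normA2 /inprodA /matvec !rsumE.
split; [|split].
- transitivity (\sum_j weight P xo j); first exact: (sum_sq_weights P_unitary xo).
  by apply: eq_bigr => j _; rewrite inord_val.
- transitivity (\sum_j (eigval D j * weight P xo j)).
    rewrite -(Anorm_weights A_spectral D_real xo).
    by apply: eq_bigr => i _; rewrite rsumE.
  by apply: eq_bigr => j _; rewrite inord_val.
- transitivity (\sum_j (eigval D j * eigval D j * weight P xo j)).
    rewrite -(Asq_weights A_sym P_unitary A_spectral D_real xo).
    by apply: eq_bigr => i _; rewrite rsumE.
  by apply: eq_bigr => j _; rewrite inord_val.
Qed.
End SpectralCoordinates.

Lemma spectral_coordinates (n : nat) (A : nat -> nat -> R) (lmin lmax : R) :
  (forall i j, (i < n)%nat -> (j < n)%nat -> A i j = A j i) ->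
  (forall lam, is_eigenvalue n A lam -> lmin <= lam <= lmax) ->
  forall x : nat -> R, exists c d : nat -> R,
    (forall j, (j < n)%nat -> 0 <= c j /\ lmin <= d j <= lmax) /\
    rsum n (fun i => x i * x i) = rsum n c /\
    normA2 n A x = rsum n (fun j => d j * c j) /\
    rsum n (fun i => matvec n A x i * matvec n A x i) = rsum n (fun j => d j * d j * c j).
Proof.
intros A_sym spec x; destruct n as [|n'].
- exists (fun _ => 0), (fun _ => 0); split; [intros j Hj; lia | repeat split].
- destruct (@SpectralCoordinates.spectral_coordinates_ord n' A lmin lmax)
    with (x := x) as [c [d [Hcd Hsums]]]; [|exact spec|].
  + intros i j; apply A_sym; apply (Bool.reflect_iff _ _ ssrnat.ltP), fintype.ltn_ord.
  + exists c, d; split; [intros j _; apply Hcd | exact Hsums].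
Qed.

Lemma rsum_ext n f g : (forall i, (i < n)%nat -> f i = g i) -> rsum n f = rsum n g.
Proof.
  induction n; intros H; simpl; [reflexivity|].
  rewrite IHn by (intros; apply H; lia). rewrite H by lia. reflexivity.
Qed.

Lemma rsum_plus n f g : rsum n (fun i => f i + g i) = rsum n f + rsum n g.
Proof. induction n; simpl; [lra|]. rewrite IHn. lra. Qed.

Lemma rsum_minus n f g : rsum n (fun i => f i - g i) = rsum n f - rsum n g.
Proof. induction n; simpl; [lra|]. rewrite IHn. lra. Qed.

Lemma rsum_scal n c f : rsum n (fun i => c * f i) = c * rsum n f.
Proof. induction n; simpl; [lra|]. rewrite IHn. lra. Qed.

Lemma rsum_const n c : rsum n (fun _ => c) = INR n * c.
Proof. induction n; simpl rsum; [simpl; lra|]. rewrite IHn, S_INR. lra. Qed.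

Lemma rsum_le n f g : (forall i, (i < n)%nat -> f i <= g i) -> rsum n f <= rsum n g.
Proof.
  induction n; intros H; simpl; [lra|].
  assert (rsum n f <= rsum n g) by (apply IHn; intros; apply H; lia).
  assert (f n <= g n) by (apply H; lia). lra.
Qed.

Lemma rsum_nonneg n f : (forall i, (i < n)%nat -> 0 <= f i) -> 0 <= rsum n f.
Proof.
  intros H. replace 0 with (rsum n (fun _ => 0)) by (rewrite rsum_const; ring).
  apply rsum_le. exact H.
Qed.

Lemma rsum_pos n f p : (forall i, (i < n)%nat -> 0 <= f i) -> (p < n)%nat -> 0 < f p ->
  0 < rsum n f.
Proof.
  induction n; intros H Hp Hf; [lia|]. simpl.
  assert (0 <= f n) by (apply H; lia).
  destruct (Nat.eq_dec p n) as [->|Hne].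
  - assert (0 <= rsum n f) by (apply rsum_nonneg; intros; apply H; lia). lra.
  - assert (0 < rsum n f) by (apply IHn; [intros; apply H; lia | lia | exact Hf]). lra.
Qed.

Lemma rsum_extend M T h h' : (M <= T)%nat -> (forall d, (d < M)%nat -> h d = h' d) ->
  (forall d, (d < T)%nat -> 0 <= h' d) -> rsum M h <= rsum T h'.
Proof.
  intros HMT Heq Hnn. induction T.
  - replace M with 0%nat by lia. simpl. lra.
  - destruct (Nat.eq_dec M (S T)) as [->|Hne].
    + right. apply rsum_ext. exact Heq.
    + simpl. assert (rsum M h <= rsum T h') by (apply IHT; [lia| intros; apply Hnn; lia]).
      assert (0 <= h' T) by (apply Hnn; lia). lra.
Qed.

Lemma rsum_swap n m (F : nat -> nat -> R) :
  rsum n (fun i => rsum m (fun j => F i j)) = rsum m (fun j => rsum n (fun i => F i j)).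
Proof.
  induction n; simpl.
  - rewrite rsum_const. simpl. lra.
  - rewrite IHn, <- rsum_plus. reflexivity.
Qed.

Lemma rsum_abs n f : Rabs (rsum n f) <= rsum n (fun i => Rabs (f i)).
Proof.
  induction n; simpl; [rewrite Rabs_R0; lra|].
  eapply Rle_trans; [apply Rabs_triang|]. lra.
Qed.

Lemma rsum_telescope (f : nat -> R) j M : (M <= j)%nat ->
  f j - f (j - M)%nat = rsum M (fun d => f (j - d)%nat - f (j - d - 1)%nat).
Proof.
  induction M; intros HM.
  - simpl. rewrite Nat.sub_0_r. ring.
  - simpl. rewrite <- IHM by lia. replace (j - S M)%nat with (j - M - 1)%nat by lia. ring.
Qed.

Lemma rsum_ebasis n p f : (p < n)%nat -> rsum n (fun i => ebasis p i * f i) = f p.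
Proof.
  induction n; intros Hp; [lia|]. simpl. unfold ebasis at 2.
  destruct (Nat.eq_dec p n) as [->|Hne].
  - rewrite Nat.eqb_refl.
    rewrite (rsum_ext n _ (fun _ => 0)), rsum_const; [ring|].
    intros i Hi. unfold ebasis. replace (Nat.eqb i n) with false
      by (symmetry; apply Nat.eqb_neq; lia). ring.
  - replace (Nat.eqb n p) with false by (symmetry; apply Nat.eqb_neq; lia).
    rewrite IHn by lia. ring.
Qed.

Section Expectation.
Variable n : nat.
Hypothesis n_pos : (1 <= n)%nat.

Let INR_n_pos : 0 < INR n.
Proof. apply lt_0_INR. lia. Qed.

Lemma expect_ext m F G : (forall s, F s = G s) -> expect_seq n m F = expect_seq n m G.
Proof. intros H. replace F with G by (symmetry; apply functional_extensionality, H). reflexivity. Qed.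

Lemma expect_plus m : forall F G,
  expect_seq n m (fun s => F s + G s) = expect_seq n m F + expect_seq n m G.
Proof.
  induction m; intros F G; simpl; [reflexivity|].
  rewrite (rsum_ext n _ (fun i => expect_seq n m (fun s => F (upd s m i))
                                 + expect_seq n m (fun s => G (upd s m i))))
    by (intros; apply IHm).
  rewrite rsum_plus. lra.
Qed.

Lemma expect_scal m : forall c F, expect_seq n m (fun s => c * F s) = c * expect_seq n m F.
Proof.
  induction m; intros c F; simpl; [reflexivity|].
  rewrite (rsum_ext n _ (fun i => c * expect_seq n m (fun s => F (upd s m i))))
    by (intros; apply IHm).
  rewrite rsum_scal. lra.
Qed.

Lemma expect_le m : forall F G, (forall s, F s <= G s) -> expect_seq n m F <= expect_seq n m G.
Proof.
  induction m; intros F G H; simpl; [apply H|].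
  apply Rmult_le_compat_l; [left; apply Rinv_0_lt_compat; lra|].
  apply rsum_le. intros i _. apply IHm. intros s. apply H.
Qed.

Lemma expect_const m c : expect_seq n m (fun _ => c) = c.
Proof.
  induction m; simpl; [reflexivity|].
  rewrite (rsum_ext n _ (fun _ => c)) by (intros; apply IHm).
  rewrite rsum_const. field. lra.
Qed.

Lemma expect_nonneg m F : (forall s, 0 <= F s) -> 0 <= expect_seq n m F.
Proof. intros H. rewrite <- (expect_const m 0). apply expect_le, H. Qed.

Lemma expect_rsum m N : forall (F : nat -> (nat -> nat) -> R),
  expect_seq n m (fun s => rsum N (fun l => F l s)) = rsum N (fun l => expect_seq n m (F l)).
Proof.
  induction N; intros F; simpl; [apply expect_const|].
  rewrite expect_plus, IHN. reflexivity.
Qed.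

Lemma expect_succ m F : expect_seq n (S m) F =
  expect_seq n m (fun s => / INR n * rsum n (fun i => F (upd s m i))).
Proof. simpl. rewrite expect_scal, expect_rsum. reflexivity. Qed.

Definition depends_below (j : nat) (F : (nat -> nat) -> R) : Prop :=
  forall s s', (forall i, (i < j)%nat -> s i = s' i) -> F s = F s'.

Lemma expect_depends_below j m F : depends_below j F -> (j <= m)%nat ->
  expect_seq n m F = expect_seq n j F.
Proof.
  intros HF Hjm. replace m with (j + (m - j))%nat by lia.
  induction (m - j)%nat as [|d IHd]; [rewrite Nat.add_0_r; reflexivity|].
  rewrite Nat.add_succ_r. simpl.
  rewrite (rsum_ext n _ (fun _ => expect_seq n (j + d) F)).
  - rewrite rsum_const, IHd. field. lra.
  - intros i _. apply expect_ext. intros s. apply HF. intros i0 Hi0. unfold upd.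
    replace (Nat.eqb i0 (j + d)) with false by (symmetry; apply Nat.eqb_neq; lia).
    reflexivity.
Qed.
End Expectation.

Section CoordinateUpdate.
Variable n : nat.
Variable A : nat -> nat -> R.
Hypothesis A_sym : forall i j, (i < n)%nat -> (j < n)%nat -> A i j = A j i.

Lemma matvec_ext v w i : (forall r, (r < n)%nat -> v r = w r) ->
  matvec n A v i = matvec n A w i.
Proof. intros H. apply rsum_ext. intros r Hr. rewrite H by exact Hr. reflexivity. Qed.

Lemma matvec_scal c v i : matvec n A (fun r => c * v r) i = c * matvec n A v i.
Proof. unfold matvec. rewrite <- rsum_scal. apply rsum_ext. intros; ring. Qed.

Lemma matvec_upd v c p i : (p < n)%nat ->
  matvec n A (fun r => v r + c * ebasis p r) i = matvec n A v i + c * A i p.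
Proof.
  intros Hp. unfold matvec.
  rewrite (rsum_ext _ _ (fun r => A i r * v r + c * (ebasis p r * A i r))) by (intros; ring).
  rewrite rsum_plus, rsum_scal, rsum_ebasis by exact Hp. reflexivity.
Qed.

Lemma matvec_transpose v p : (p < n)%nat -> rsum n (fun i => v i * A i p) = matvec n A v p.
Proof.
  intros Hp. apply rsum_ext. intros i Hi. rewrite (A_sym i p) by assumption. ring.
Qed.

Lemma normA2_upd v c p : (p < n)%nat ->
  normA2 n A (fun r => v r + c * ebasis p r) =
  normA2 n A v + 2 * c * matvec n A v p + c * c * A p p.
Proof.
  intros Hp. unfold normA2, inprodA.
  rewrite (rsum_ext _ _ (fun i => v i * matvec n A v i + c * (v i * A i p)
      + c * (ebasis p i * matvec n A v i) + c * c * (ebasis p i * A i p))).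
  2:{ intros i Hi. rewrite matvec_upd by exact Hp. ring. }
  rewrite !rsum_plus, !rsum_scal, matvec_transpose, !rsum_ebasis by exact Hp.
  ring.
Qed.
End CoordinateUpdate.

Section ErrorRecursion.
Variable n : nat.
Variable A : nat -> nat -> R.
Variables xstar x0 : nat -> R.
Variable k : nat -> nat.
Hypothesis k_le : forall j, (k j <= j)%nat.

Notation history := (hist n A xstar x0 1 k).
Notation x_ := (iterate n A xstar x0 1 k).

Lemma history_stable s j : forall i, (i <= j)%nat -> history s j i = history s i i.
Proof.
  induction j; intros i Hi.
  - replace i with 0%nat by lia. reflexivity.
  - destruct (Nat.eq_dec i (S j)) as [->|Hne]; [reflexivity|].
    simpl. replace (Nat.leb i j) with true by (symmetry; apply Nat.leb_le; lia).
    apply IHj. lia.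
Qed.

Lemma history_depends j : forall s s', (forall i, (i < j)%nat -> s i = s' i) ->
  history s j = history s' j.
Proof.
  induction j; intros s s' H; [reflexivity|].
  simpl. rewrite (IHj s s') by (intros; apply H; lia).
  rewrite (H j) by lia. reflexivity.
Qed.

Definition err s j : nat -> R := fun r => x_ s j r - xstar r.

Lemma err_depends j s s' : (forall i, (i < j)%nat -> s i = s' i) -> err s j = err s' j.
Proof. intros H. unfold err, iterate. rewrite (history_depends j s s' H). reflexivity. Qed.

Lemma err_succ s j : (s j < n)%nat -> err s (S j) =
  fun r => err s j r + (- matvec n A (err s (k j)) (s j)) * ebasis (s j) r.
Proof.
  intros Hp. apply functional_extensionality; intro r. unfold err at 1, iterate.
  change (history s (S j) (S j) r) with ((if Nat.leb (S j) j then history s j (S j) else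
     (fun r => history s j j r + 1 * inprodA n A (fun r => xstar r - history s j (k j) r)
        (ebasis (s j)) * ebasis (s j) r)) r).
  replace (Nat.leb (S j) j) with false by (symmetry; apply Nat.leb_gt; lia).
  rewrite (history_stable s j (k j)) by apply k_le.
  unfold inprodA. rewrite rsum_ebasis by exact Hp.
  rewrite (matvec_ext n A _ (fun r => (-1) * err s (k j) r))
    by (intros; unfold err, iterate; ring).
  rewrite matvec_scal. unfold err, iterate. ring.
Qed.

Lemma upd_before s j p : forall i, (i < j)%nat -> upd s j p i = s i.
Proof.
  intros i Hi. unfold upd.
  replace (Nat.eqb i j) with false by (symmetry; apply Nat.eqb_neq; lia). reflexivity.
Qed.

Lemma err_succ_upd s j p : (p < n)%nat -> err (upd s j p) (S j) =
  fun r => err s j r + (- matvec n A (err s (k j)) p) * ebasis p r.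
Proof.
  intros Hp. assert (Hs : upd s j p j = p) by (unfold upd; rewrite Nat.eqb_refl; reflexivity).
  rewrite err_succ by (rewrite Hs; exact Hp). rewrite Hs.
  rewrite (err_depends j (upd s j p) s) by apply upd_before.
  rewrite (err_depends (k j) (upd s j p) s)
    by (intros; apply upd_before; specialize (k_le j); lia).
  reflexivity.
Qed.
End ErrorRecursion.

Lemma rmax_upto_ge K f l : (l <= K)%nat -> f l <= rmax_upto K f.
Proof.
  induction K; intros Hl; simpl.
  - replace l with 0%nat by lia. lra.
  - destruct (Nat.eq_dec l (S K)) as [->|Hne]; [apply Rmax_r|].
    eapply Rle_trans; [apply IHK; lia| apply Rmax_l].
Qed.

Lemma exists_argmax m (f : nat -> R) :
  exists p, (p <= m)%nat /\ forall i, (i <= m)%nat -> f i <= f p.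
Proof.
  induction m.
  - exists 0%nat. split; [lia|]. intros i Hi. replace i with 0%nat by lia. lra.
  - destruct IHm as [p [Hp Hf]].
    destruct (Rle_dec (f p) (f (S m))) as [Hle|Hgt].
    + exists (S m). split; [lia|]. intros i Hi.
      destruct (Nat.eq_dec i (S m)) as [->|Hne]; [lra|].
      eapply Rle_trans; [apply Hf; lia|exact Hle].
    + exists p. split; [lia|]. intros i Hi.
      destruct (Nat.eq_dec i (S m)) as [->|Hne]; [lra|]. apply Hf; lia.
Qed.

Definition sqnorm (n : nat) (v : nat -> R) : R := rsum n (fun i => v i * v i).

Lemma sqnorm_nonneg n v : 0 <= sqnorm n v.
Proof. apply rsum_nonneg. intros. nra. Qed.

Lemma Rdiv_le_0_compat a b : 0 <= a -> 0 < b -> 0 <= a / b.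
Proof. intros. unfold Rdiv. apply Rmult_le_pos; [lra | left; apply Rinv_0_lt_compat; lra]. Qed.

Lemma pow_le1 x d : 0 <= x <= 1 -> x ^ d <= 1.
Proof.
  intros Hx. induction d; simpl; [lra|].
  assert (0 <= x ^ d) by (apply pow_le; lra). nra.
Qed.

Lemma pow_antitone x a b : 0 <= x <= 1 -> (a <= b)%nat -> x ^ b <= x ^ a.
Proof.
  intros Hx Hab. replace b with (a + (b - a))%nat by lia. rewrite pow_add.
  pose proof (pow_le1 x (b - a) Hx). assert (0 <= x ^ a) by (apply pow_le; lra). nra.
Qed.

Lemma geometric_sum q b : rsum b (fun d => q ^ d) * (1 - q) = 1 - q ^ b.
Proof. induction b; simpl; [ring|]. rewrite Rmult_plus_distr_r, IHb. ring. Qed.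

Lemma young_neg L u w : 0 < L -> - (L / 2 * (u * u) + / (2 * L) * (w * w)) <= - u * w.
Proof.
  intros HL.
  assert (H : 0 <= (L * u - w) * (L * u - w) * / (2 * L)).
  { apply Rmult_le_pos; [apply Rle_0_sqr|]. left. apply Rinv_0_lt_compat. lra. }
  replace ((L * u - w) * (L * u - w) * / (2 * L)) with
    (L / 2 * (u * u) + / (2 * L) * (w * w) - u * w) in H by (field; lra).
  lra.
Qed.

Section SymmetricPositiveDefinite.
Variable n : nat.
Variable A : nat -> nat -> R.
Hypothesis A_sym : forall i j, (i < n)%nat -> (j < n)%nat -> A i j = A j i.
Hypothesis A_pd : forall v : nat -> R, (exists i, (i < n)%nat /\ v i <> 0) -> 0 < normA2 n A v.
Variables lmin lmax : R.
Hypothesis lmin_eig : is_eigenvalue n A lmin.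
Hypothesis lmax_eig : is_eigenvalue n A lmax.
Hypothesis spectrum : forall lam, is_eigenvalue n A lam -> lmin <= lam <= lmax.

Lemma lmin_pos : 0 < lmin.
Proof.
  destruct lmin_eig as [v [[i [Hi Hv]] Hev]].
  assert (H1 : 0 < normA2 n A v) by (apply A_pd; exists i; auto).
  assert (HR : normA2 n A v = lmin * sqnorm n v).
  { unfold normA2, inprodA, sqnorm. rewrite <- rsum_scal. apply rsum_ext.
    intros r Hr. rewrite Hev by exact Hr. ring. }
  assert (H2 : 0 < sqnorm n v).
  { apply (rsum_pos _ _ i); auto; [intros; nra|].
    apply Rsqr_pos_lt in Hv. unfold Rsqr in Hv. lra. }
  nra.
Qed.

Lemma lmin_le_lmax : lmin <= lmax.
Proof. apply spectrum, lmin_eig. Qed.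

Lemma lmax_pos : 0 < lmax.
Proof. pose proof lmin_pos. pose proof lmin_le_lmax. lra. Qed.

Lemma rayleigh_bounds v :
  lmin * normA2 n A v <= sqnorm n (matvec n A v) /\
  sqnorm n (matvec n A v) <= lmax * normA2 n A v /\
  normA2 n A v <= lmax * sqnorm n v /\ 0 <= normA2 n A v.
Proof.
  pose proof lmin_pos.
  destruct (spectral_coordinates n A lmin lmax A_sym spectrum v)
    as [c [d [Hcd [H1 [H2 H3]]]]].
  unfold sqnorm. rewrite H1, H2, H3, <- !rsum_scal.
  repeat split; [apply rsum_le.. | apply rsum_nonneg]; intros j Hj;
    destruct (Hcd j Hj) as [Hc [Hd1 Hd2]].
  - assert (0 <= d j * c j * (d j - lmin)) by (apply Rmult_le_pos; nra). nra.
  - assert (0 <= d j * c j * (lmax - d j)) by (apply Rmult_le_pos; nra). nra.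
  - assert (0 <= c j * (lmax - d j)) by (apply Rmult_le_pos; lra). nra.
  - apply Rmult_le_pos; lra.
Qed.

Lemma normA2_nonneg v : 0 <= normA2 n A v.
Proof. apply rayleigh_bounds. Qed.

Lemma sqnorm_matvec_ge v : lmin * normA2 n A v <= sqnorm n (matvec n A v).
Proof. apply rayleigh_bounds. Qed.

Lemma sqnorm_matvec_le v : sqnorm n (matvec n A v) <= lmax * normA2 n A v.
Proof. apply rayleigh_bounds. Qed.

Lemma normA2_le v : normA2 n A v <= lmax * sqnorm n v.
Proof. apply rayleigh_bounds. Qed.

Hypothesis A_diag : forall i, (i < n)%nat -> A i i = 1.

(* Positive definiteness on e^(p) - A_pq e^(q) gives 1 - A_pq^2 > 0. *)
Lemma offdiag_lt p q : (p < n)%nat -> (q < n)%nat -> p <> q -> Rabs (A p q) < 1.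
Proof.
  intros Hp Hq Hpq.
  set (u := fun r : nat => 0 + 1 * ebasis p r).
  assert (Hv : 0 < normA2 n A (fun r => u r + (- A p q) * ebasis q r)).
  { apply A_pd. exists p. split; auto. unfold u, ebasis. rewrite Nat.eqb_refl.
    replace (Nat.eqb p q) with false by (symmetry; apply Nat.eqb_neq; exact Hpq). lra. }
  assert (Z : forall i, matvec n A (fun _ => 0) i = 0).
  { intros i. unfold matvec. rewrite (rsum_ext n _ (fun _ => 0)) by (intros; ring).
    rewrite rsum_const. ring. }
  assert (Z2 : normA2 n A (fun _ => 0) = 0).
  { unfold normA2, inprodA. rewrite (rsum_ext n _ (fun _ => 0)) by (intros; ring).
    rewrite rsum_const. ring. }
  rewrite (normA2_upd n A A_sym u) in Hv by exact Hq.
  unfold u in Hv.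
  pose proof (normA2_upd n A A_sym (fun _ => 0) 1 p Hp) as E1.
  pose proof (matvec_upd n A (fun _ => 0) 1 p q Hp) as E2.
  cbv beta in E1, E2. rewrite E1, E2 in Hv.
  rewrite !Z, Z2, (A_sym q p), !A_diag in Hv by auto.
  assert (A p q * A p q < 1) by nra.
  apply Rabs_def1; nra.
Qed.

(* Gershgorin: |lmax| is at most the absolute row sum of A at the largest
   coordinate of an lmax-eigenvector. *)
Lemma lmax_le_row_sum :
  exists p, (p < n)%nat /\ Rabs lmax <= rsum n (fun r => Rabs (A p r)).
Proof.
  destruct lmax_eig as [v [[i0 [Hi0 Hv0]] Hev]].
  destruct (exists_argmax (n - 1) (fun i => Rabs (v i))) as [p [Hp Hmax]].
  exists p. split; [lia|].
  assert (Hvp : 0 < Rabs (v p)).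
  { assert (Rabs (v i0) <= Rabs (v p)) by (apply Hmax; lia).
    assert (0 < Rabs (v i0)) by (apply Rabs_pos_lt; auto). lra. }
  apply Rmult_le_reg_r with (Rabs (v p)); [exact Hvp|].
  rewrite <- Rabs_mult, <- (Hev p) by lia. unfold matvec.
  eapply Rle_trans; [apply rsum_abs|]. rewrite Rmult_comm, <- rsum_scal.
  apply rsum_le. intros r Hr. rewrite Rabs_mult.
  assert (Rabs (v r) <= Rabs (v p)) by (apply Hmax; lia).
  pose proof (Rabs_pos (A p r)). nra.
Qed.

Lemma lmax_le_norm_inf : lmax <= norm_inf n A.
Proof.
  destruct lmax_le_row_sum as [p [Hp Hrow]].
  eapply Rle_trans; [apply Rle_abs|]. eapply Rle_trans; [exact Hrow|].
  apply (rmax_upto_ge (n - 1) (fun l => rsum n (fun r => Rabs (A l r))) p). lia.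
Qed.

(* With unit diagonal, every row sum of |A| is < n as soon as n >= 2. *)
Lemma lmax_lt_n : (2 <= n)%nat -> lmax < INR n.
Proof.
  intros Hn. destruct lmax_le_row_sum as [p [Hp Hrow]].
  assert (exists q, (q < n)%nat /\ q <> p) as [q [Hq Hqp]].
  { destruct (Nat.eq_dec p 0) as [->|Hne]; [exists 1%nat|exists 0%nat]; split; lia. }
  assert (0 < rsum n (fun r => 1 - Rabs (A p r))).
  { apply (rsum_pos _ _ q); [|exact Hq|].
    - intros r Hr. destruct (Nat.eq_dec r p) as [->|Hne].
      + rewrite A_diag, Rabs_R1 by auto. lra.
      + pose proof (offdiag_lt p r Hp Hr (fun h => Hne (eq_sym h))). lra.
    - pose proof (offdiag_lt p q Hp Hq (fun h => Hqp (eq_sym h))). lra. }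
  rewrite rsum_minus, rsum_const in H.
  pose proof (Rle_abs lmax). lra.
Qed.

Section Process.
Hypothesis n_ge2 : (2 <= n)%nat.
Variables xstar x0 : nat -> R.
Variable k : nat -> nat.
Variable tau : nat.
Hypothesis k_window : forall j, (j <= k j + tau)%nat /\ (k j <= j)%nat.

Let n_pos : (1 <= n)%nat.
Proof. lia. Qed.

Let INR_n_pos : 0 < INR n.
Proof. apply lt_0_INR. lia. Qed.

Let k_le j : (k j <= j)%nat.
Proof. apply k_window. Qed.

Notation e := (err n A xstar x0 k).

Definition En (j : nat) : R := Em n A xstar x0 1 k j.

Definition resid (a : nat) : R := expect_seq n a (fun s => sqnorm n (matvec n A (e s a))).

Lemma En_def j : En j = expect_seq n j (fun s => normA2 n A (e s j)).
Proof. reflexivity. Qed.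

Lemma err_fun_depends a j (G : (nat -> R) -> R) : (a <= j)%nat ->
  depends_below j (fun s => G (e s a)).
Proof.
  intros Ha s s' H. rewrite (err_depends n A xstar x0 k a s s'); [reflexivity|].
  intros; apply H; lia.
Qed.

Lemma resid_horizon a j : (a <= j)%nat ->
  expect_seq n j (fun s => sqnorm n (matvec n A (e s a))) = resid a.
Proof.
  intros Ha. apply (expect_depends_below n n_pos a); [|exact Ha].
  apply (err_fun_depends a a (fun v => sqnorm n (matvec n A v))). lia.
Qed.

Lemma En_nonneg j : 0 <= En j.
Proof. apply expect_nonneg; [exact n_pos|]. intros s. apply normA2_nonneg. Qed.

Lemma resid_nonneg a : 0 <= resid a.
Proof. apply expect_nonneg; [exact n_pos|]. intros s. apply sqnorm_nonneg. Qed.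

Lemma resid_le a : resid a <= lmax * En a.
Proof.
  unfold resid. rewrite En_def, <- expect_scal by exact n_pos.
  apply expect_le; [exact n_pos|]. intros s. apply sqnorm_matvec_le.
Qed.

Lemma resid_ge a : lmin * En a <= resid a.
Proof.
  unfold resid. rewrite En_def, <- expect_scal by exact n_pos.
  apply expect_le; [exact n_pos|]. intros s. apply sqnorm_matvec_ge.
Qed.

Lemma average_step s j :
  / INR n * rsum n (fun p => normA2 n A (e (upd s j p) (S j))) =
  normA2 n A (e s j) + / INR n * rsum n (fun p =>
     -2 * matvec n A (e s (k j)) p * matvec n A (e s j) p
     + matvec n A (e s (k j)) p * matvec n A (e s (k j)) p).
Proof.
  rewrite (rsum_ext n _ (fun p => normA2 n A (e s j) + (
     -2 * matvec n A (e s (k j)) p * matvec n A (e s j) p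
     + matvec n A (e s (k j)) p * matvec n A (e s (k j)) p))).
  - rewrite rsum_plus, rsum_const. field. lra.
  - intros p Hp. rewrite (err_succ_upd n A xstar x0 k k_le s j p Hp).
    rewrite (normA2_upd n A A_sym), A_diag by exact Hp. ring.
Qed.

(* Since a_p^2 - 2 a_p b_p >= - b_p^2, one step loses at most a factor
   q = 1 - lmax/n of the error energy. *)
Lemma En_succ_ge j : (1 - lmax / INR n) * En j <= En (S j).
Proof.
  rewrite !En_def, expect_succ, <- expect_scal by exact n_pos.
  apply expect_le; [exact n_pos|]. intros s. rewrite average_step.
  set (a := matvec n A (e s (k j))). set (b := matvec n A (e s j)).
  assert (H1 : - sqnorm n b <= rsum n (fun p => -2 * a p * b p + a p * a p)).
  { unfold sqnorm. rewrite <- (Rmult_1_l (rsum n (fun i => b i * b i))).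
    rewrite Ropp_mult_distr_l, <- rsum_scal. apply rsum_le. intros p _.
    pose proof (Rle_0_sqr (a p - b p)). unfold Rsqr in *. lra. }
  pose proof (sqnorm_matvec_le (e s j)) as H2. fold b in H2.
  assert (Hn : 0 < / INR n) by (apply Rinv_0_lt_compat; lra).
  replace ((1 - lmax / INR n) * normA2 n A (e s j)) with
    (normA2 n A (e s j) - / INR n * (lmax * normA2 n A (e s j))) by (field; lra).
  nra.
Qed.
Definition cross (j l : nat) (s : nat -> nat) : R :=
  rsum n (fun p => matvec n A (e s (k j)) p *
                   (matvec n A (e s (S l)) p - matvec n A (e s l) p)).

Lemma cross_telescope s j :
  rsum n (fun p => matvec n A (e s (k j)) p *
     (matvec n A (e s j) p - matvec n A (e s (k j)) p)) =
  rsum (j - k j) (fun d => cross j (j - d - 1) s).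
Proof.
  set (f := fun l => rsum n (fun p => matvec n A (e s (k j)) p * matvec n A (e s l) p)).
  transitivity (f j - f (j - (j - k j))%nat).
  - replace (j - (j - k j))%nat with (k j) by (pose proof (k_le j); lia).
    unfold f. rewrite <- rsum_minus. apply rsum_ext. intros; ring.
  - rewrite rsum_telescope by lia. apply rsum_ext. intros d Hd.
    unfold f, cross. rewrite <- rsum_minus.
    set (l := (j - d - 1)%nat). replace (j - d)%nat with (S l) by (unfold l; lia).
    apply rsum_ext. intros; ring.
Qed.

Lemma cross_upd s j l q : (k j <= l)%nat -> (q < n)%nat ->
  cross j l (upd s l q) =
  - matvec n A (e s (k l)) q * matvec n A (matvec n A (e s (k j))) q.
Proof.
  intros Hl Hq. unfold cross.
  rewrite (err_succ_upd n A xstar x0 k k_le s l q Hq).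
  rewrite (err_depends n A xstar x0 k l (upd s l q) s) by apply upd_before.
  rewrite (err_depends n A xstar x0 k (k j) (upd s l q) s)
    by (intros; apply upd_before; lia).
  rewrite (rsum_ext n _ (fun p => (- matvec n A (e s (k l)) q) *
        (matvec n A (e s (k j)) p * A p q))).
  - rewrite rsum_scal, (matvec_transpose n A A_sym) by exact Hq. reflexivity.
  - intros p Hp. rewrite (matvec_upd n A) by exact Hq. ring.
Qed.

Lemma cross_depends j l : (k j <= l)%nat -> depends_below (S l) (cross j l).
Proof.
  intros Hl s s' H. unfold cross.
  rewrite (err_depends n A xstar x0 k (k j) s s'), (err_depends n A xstar x0 k (S l) s s'),
    (err_depends n A xstar x0 k l s s') by (intros; apply H; lia).
  reflexivity.
Qed.

(* Young's inequality and ||A w||^2 <= lmax^2 ||w||^2 bound the expected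
   increment from below by residual energies. *)
Lemma cross_expect_ge j l : (k j <= l)%nat ->
  - (lmax / (2 * INR n)) * (resid (k l) + resid (k j)) <= expect_seq n (S l) (cross j l).
Proof.
  intros Hl. pose proof lmax_pos as Hlm.
  rewrite expect_succ by exact n_pos.
  rewrite <- (resid_horizon (k l) l), <- (resid_horizon (k j) l) by (try apply k_le; lia).
  rewrite <- expect_plus, <- expect_scal by exact n_pos.
  apply expect_le; [exact n_pos|]. intros s.
  rewrite (rsum_ext n _ (fun q => - matvec n A (e s (k l)) q
                                 * matvec n A (matvec n A (e s (k j))) q))
    by (intros q Hq; apply cross_upd; assumption).
  set (u := matvec n A (e s (k l))). set (a := matvec n A (e s (k j))).
  set (w := matvec n A a).
  assert (H1 : - (lmax / 2 * sqnorm n u + / (2 * lmax) * sqnorm n w)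
               <= rsum n (fun q => - u q * w q)).
  { unfold sqnorm. rewrite <- !rsum_scal, <- rsum_plus.
    rewrite <- (Rmult_1_l (rsum _ _)), Ropp_mult_distr_l, <- rsum_scal.
    apply rsum_le. intros q _. pose proof (young_neg lmax (u q) (w q) Hlm). lra. }
  pose proof (sqnorm_matvec_le a) as Hw1. pose proof (normA2_le a) as Hw2. fold w in Hw1.
  assert (H2 : / (2 * lmax) * sqnorm n w <= lmax / 2 * sqnorm n a).
  { assert (sqnorm n w <= lmax * (lmax * sqnorm n a)) by nra.
    apply Rmult_le_reg_l with (2 * lmax); [lra|].
    replace (2 * lmax * (/ (2 * lmax) * sqnorm n w)) with (sqnorm n w) by (field; lra).
    nra. }
  replace (- (lmax / (2 * INR n)) * (sqnorm n u + sqnorm n a)) with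
     (/ INR n * (- (lmax / 2) * (sqnorm n u + sqnorm n a))) by (field; lra).
  apply Rmult_le_compat_l; [left; apply Rinv_0_lt_compat; lra| lra].
Qed.

Lemma En_succ_le j : En (S j) <= En j - / INR n * resid (k j) +
  lmax / (INR n * INR n) * rsum (j - k j) (fun d => resid (k (j - d - 1)%nat) + resid (k j)).
Proof.
  rewrite !En_def, expect_succ by exact n_pos.
  set (M := (j - k j)%nat).
  rewrite (expect_ext n j _ (fun s => normA2 n A (e s j) +
      (- / INR n * sqnorm n (matvec n A (e s (k j))) +
       (-2 / INR n) * rsum M (fun d => cross j (j - d - 1) s)))).
  2:{ intros s. rewrite average_step. unfold M. rewrite <- cross_telescope.
      set (a := matvec n A (e s (k j))). set (b := matvec n A (e s j)).
      rewrite (rsum_ext n _ (fun p => (-1) * (a p * a p) + (-2) * (a p * (b p - a p))))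
        by (intros; ring).
      rewrite rsum_plus, !rsum_scal. unfold sqnorm. field. lra. }
  rewrite !expect_plus, !expect_scal, expect_rsum, resid_horizon by (try exact n_pos; apply k_le).
  set (SR := rsum M (fun d => resid (k (j - d - 1)%nat) + resid (k j))).
  set (SE := rsum M (fun d => expect_seq n j (cross j (j - d - 1)))).
  assert (HD : - (lmax / (2 * INR n)) * SR <= SE).
  { unfold SR, SE. rewrite <- rsum_scal. apply rsum_le. intros d Hd. unfold M in Hd.
    rewrite (expect_depends_below n n_pos (S (j - d - 1)) j) by
      (try apply cross_depends; lia).
    apply cross_expect_ge. lia. }
  assert (H2 : (-2 / INR n) * SE <= lmax / (INR n * INR n) * SR).
  { replace (lmax / (INR n * INR n) * SR) with ((-2 / INR n) * (- (lmax / (2 * INR n)) * SR))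
      by (field; lra).
    apply Rmult_le_compat_neg_l; [|exact HD].
    unfold Rdiv. assert (0 < / INR n) by (apply Rinv_0_lt_compat; lra). lra. }
  lra.
Qed.
(* The delayed
   residuals resid (k l) are bookkept with indicators of the time ranges
   j >= t ("from t") and t - tau <= l < t ("just before t"). *)
Definition resid_k (l : nat) : R := resid (k l).

Definition lag_term (j d : nat) : R := if Nat.leb (S d) j then resid_k (j - d - 1)%nat else 0.

Definition lag_sum (j : nat) : R := rsum tau (fun d => lag_term j d).

Definition from_ind (t j : nat) : R := if Nat.leb t j then 1 else 0.

Definition before_ind (t l : nat) : R :=
  if (Nat.ltb l t && Nat.leb t (l + tau))%bool then 1 else 0.

Definition delay_coef : R := lmax / (INR n * INR n).

Lemma resid_k_nonneg l : 0 <= resid_k l.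
Proof. apply resid_nonneg. Qed.

Lemma lag_term_nonneg j d : 0 <= lag_term j d.
Proof. unfold lag_term. destruct (Nat.leb (S d) j); [apply resid_k_nonneg|lra]. Qed.

Lemma from_ind_nonneg t j : 0 <= from_ind t j.
Proof. unfold from_ind; destruct (Nat.leb t j); lra. Qed.

Lemma before_ind_nonneg t j : 0 <= before_ind t j.
Proof. unfold before_ind; destruct (_ && _)%bool; lra. Qed.

Lemma delay_coef_nonneg : 0 <= delay_coef.
Proof.
  unfold delay_coef. pose proof lmax_pos.
  apply Rmult_le_pos; [lra|]. left. apply Rinv_0_lt_compat. nra.
Qed.

Lemma En_succ_lag j :
  En (S j) <= En j - (/ INR n - delay_coef * INR tau) * resid_k j + delay_coef * lag_sum j.
Proof.
  pose proof (En_succ_le j) as H. fold delay_coef in H.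
  rewrite rsum_plus, rsum_const in H.
  assert (H1 : rsum (j - k j) (fun d => resid (k (j - d - 1)%nat)) <= lag_sum j).
  { unfold lag_sum. apply rsum_extend.
    - pose proof (k_window j). lia.
    - intros d Hd. unfold lag_term.
      replace (Nat.leb (S d) j) with true by (symmetry; apply Nat.leb_le; lia). reflexivity.
    - intros; apply lag_term_nonneg. }
  assert (H2 : INR (j - k j) * resid (k j) <= INR tau * resid_k j).
  { apply Rmult_le_compat_r; [apply resid_k_nonneg|]. apply le_INR.
    pose proof (k_window j). lia. }
  pose proof delay_coef_nonneg.
  assert (delay_coef * (rsum (j - k j) (fun d => resid (k (j - d - 1)%nat))
                        + INR (j - k j) * resid (k j))
    <= delay_coef * (lag_sum j + INR tau * resid_k j)) by (apply Rmult_le_compat_l; lra).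
  unfold resid_k in *. lra.
Qed.

Lemma En_window_sum t d : En (t + d) <=
  En t - (/ INR n - delay_coef * INR tau) * rsum (t + d) (fun j => from_ind t j * resid_k j)
  + delay_coef * rsum (t + d) (fun j => from_ind t j * lag_sum j).
Proof.
  assert (Z : forall F, rsum t (fun j => from_ind t j * F j) = 0).
  { intros F. rewrite (rsum_ext t _ (fun _ => 0)), rsum_const; [ring|].
    intros j Hj. unfold from_ind.
    replace (Nat.leb t j) with false by (symmetry; apply Nat.leb_gt; lia). ring. }
  induction d.
  - rewrite Nat.add_0_r, !Z. lra.
  - rewrite Nat.add_succ_r. simpl rsum.
    assert (Hi : from_ind t (t + d) = 1).
    { unfold from_ind. replace (Nat.leb t (t + d)) with true
        by (symmetry; apply Nat.leb_le; lia). reflexivity. }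
    rewrite Hi. pose proof (En_succ_lag (t + d)). lra.
Qed.

Lemma lag_reindex t d m : rsum m (fun j => from_ind t j * lag_term j d) =
  rsum (m - S d) (fun l => from_ind t (l + S d) * resid_k l).
Proof.
  induction m; [reflexivity|].
  simpl rsum at 1. rewrite IHm. unfold lag_term.
  destruct (Nat.leb (S d) m) eqn:E.
  - apply Nat.leb_le in E. replace (S m - S d)%nat with (S (m - S d)) by lia.
    simpl rsum. replace (m - S d + S d)%nat with m by lia.
    replace (m - d - 1)%nat with (m - S d)%nat by lia. reflexivity.
  - apply Nat.leb_gt in E. replace (S m - S d)%nat with (m - S d)%nat by lia. ring.
Qed.

(* Each delayed residual is counted at most tau times, at a time either
   inside the window or at most tau steps before it. *)
Lemma lag_sum_window t m : rsum m (fun j => from_ind t j * lag_sum j) <=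
  INR tau * (rsum m (fun l => from_ind t l * resid_k l)
             + rsum m (fun l => before_ind t l * resid_k l)).
Proof.
  unfold lag_sum.
  rewrite (rsum_ext m _ (fun j => rsum tau (fun d => from_ind t j * lag_term j d)))
    by (intros; rewrite rsum_scal; reflexivity).
  rewrite rsum_swap, <- rsum_plus, <- rsum_const.
  apply rsum_le. intros d Hd. rewrite lag_reindex.
  apply Rle_trans with (rsum (m - S d) (fun l => from_ind t l * resid_k l
                                                + before_ind t l * resid_k l)).
  - apply rsum_le. intros l Hl. pose proof (resid_k_nonneg l).
    assert (from_ind t (l + S d) <= from_ind t l + before_ind t l).
    { unfold from_ind, before_ind.
      destruct (Nat.leb t (l + S d)) eqn:E1; destruct (Nat.leb t l) eqn:E2;
      destruct (Nat.ltb l t) eqn:E3; destruct (Nat.leb t (l + tau)) eqn:E4; simpl;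
      try lra.
      all: apply Nat.leb_le in E1 || apply Nat.leb_gt in E1;
           apply Nat.leb_le in E2 || apply Nat.leb_gt in E2;
           apply Nat.ltb_lt in E3 || apply Nat.ltb_ge in E3;
           apply Nat.leb_le in E4 || apply Nat.leb_gt in E4; lia. }
    nra.
  - apply rsum_extend; [lia|reflexivity|].
    intros l _. pose proof (resid_k_nonneg l).
    pose proof (from_ind_nonneg t l). pose proof (before_ind_nonneg t l). nra.
Qed.

Definition rho : R := / INR n * norm_inf n A.
Definition nu : R := 1 - 2 * rho * INR tau.
Definition q : R := 1 - lmax / INR n.

Lemma rho_nonneg : 0 <= rho.
Proof.
  pose proof lmax_le_norm_inf. pose proof lmax_pos.
  unfold rho. apply Rmult_le_pos; [left; apply Rinv_0_lt_compat|]; lra.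
Qed.

Lemma q_bounds : 0 < q < 1.
Proof.
  pose proof (lmax_lt_n n_ge2). pose proof lmax_pos.
  assert (0 < lmax / INR n < 1).
  { split; [apply Rdiv_lt_0_compat; lra|].
    apply Rmult_lt_reg_r with (INR n); [lra|].
    unfold Rdiv. rewrite Rmult_assoc, Rinv_l by lra. lra. }
  unfold q. lra.
Qed.

(* Gershgorin's bound lmax <= ||A||_oo turns lmax/n^2 into rho/n. *)
Lemma delay_coef_le : delay_coef <= rho / INR n.
Proof.
  pose proof lmax_le_norm_inf.
  unfold delay_coef, rho, Rdiv. rewrite Rinv_mult.
  assert (0 < / INR n) by (apply Rinv_0_lt_compat; lra).
  assert (lmax * (/ INR n * / INR n) <= norm_inf n A * (/ INR n * / INR n))
    by (apply Rmult_le_compat_r; [nra|lra]).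
  nra.
Qed.

Definition active_sum (t m : nat) : R := rsum m (fun j => from_ind t j * resid_k j).
Definition before_sum (t m : nat) : R := rsum m (fun l => before_ind t l * resid_k l).

Lemma active_sum_nonneg t m : 0 <= active_sum t m.
Proof.
  apply rsum_nonneg. intros j _.
  pose proof (from_ind_nonneg t j). pose proof (resid_k_nonneg j). nra.
Qed.

Lemma before_sum_nonneg t m : 0 <= before_sum t m.
Proof.
  apply rsum_nonneg. intros j _.
  pose proof (before_ind_nonneg t j). pose proof (resid_k_nonneg j). nra.
Qed.

Lemma En_window t m : (t <= m)%nat ->
  En m <= En t - (nu / INR n) * active_sum t m + (rho * INR tau / INR n) * before_sum t m.
Proof.
  intros Htm. pose proof (En_window_sum t (m - t)) as H.
  replace (t + (m - t))%nat with m in H by lia.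
  pose proof (lag_sum_window t m) as HG. fold (active_sum t m) (before_sum t m) in HG.
  fold (active_sum t m) in H.
  pose proof delay_coef_nonneg. pose proof delay_coef_le.
  pose proof (active_sum_nonneg t m). pose proof (before_sum_nonneg t m).
  pose proof (pos_INR tau).
  assert (HA1 : delay_coef * rsum m (fun j => from_ind t j * lag_sum j)
                <= delay_coef * (INR tau * (active_sum t m + before_sum t m)))
    by (apply Rmult_le_compat_l; lra).
  assert (HA2 : delay_coef * INR tau * (2 * active_sum t m + before_sum t m)
                <= rho / INR n * INR tau * (2 * active_sum t m + before_sum t m)).
  { apply Rmult_le_compat_r; [lra|]. apply Rmult_le_compat_r; lra. }
  unfold nu. unfold Rdiv in *.
  replace ((1 - 2 * rho * INR tau) * / INR n * active_sum t m) with
     (/ INR n * active_sum t m - rho * / INR n * INR tau * (2 * active_sum t m)) by ring.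
  nra.
Qed.
(* Lower bounds: the error energy decays at most geometrically (rate q), so
   residuals inside a window are comparable to E_t. *)
Lemma En_geometric_ge a d : q ^ d * En a <= En (a + d).
Proof.
  induction d.
  - rewrite Nat.add_0_r. simpl. lra.
  - rewrite Nat.add_succ_r. pose proof (En_succ_ge (a + d)) as H. fold q in H.
    pose proof q_bounds. simpl.
    assert (q * (q ^ d * En a) <= q * En (a + d)) by (apply Rmult_le_compat_l; lra).
    lra.
Qed.

Lemma resid_k_ge t j : (t <= k j)%nat -> lmin * (q ^ (j - t) * En t) <= resid_k j.
Proof.
  intros Ht. unfold resid_k. pose proof (resid_ge (k j)) as H1.
  pose proof (En_geometric_ge t (k j - t)) as H2.
  replace (t + (k j - t))%nat with (k j) in H2 by lia.
  pose proof q_bounds. pose proof lmin_pos. pose proof (En_nonneg t).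
  assert (q ^ (j - t) <= q ^ (k j - t)) by (apply pow_antitone; [lra| pose proof (k_le j); lia]).
  assert (q ^ (j - t) * En t <= q ^ (k j - t) * En t) by (apply Rmult_le_compat_r; lra).
  assert (lmin * (q ^ (j - t) * En t) <= lmin * En (k j)) by (apply Rmult_le_compat_l; lra).
  lra.
Qed.

Lemma from_ind_sum a b f :
  rsum (a + b) (fun j => from_ind a j * f j) = rsum b (fun d => f (a + d)%nat).
Proof.
  induction b.
  - rewrite Nat.add_0_r. simpl. rewrite (rsum_ext a _ (fun _ => 0)), rsum_const; [ring|].
    intros j Hj. unfold from_ind.
    replace (Nat.leb a j) with false by (symmetry; apply Nat.leb_gt; lia). ring.
  - rewrite Nat.add_succ_r. simpl. rewrite IHb. unfold from_ind.
    replace (Nat.leb a (a + b)) with true by (symmetry; apply Nat.leb_le; lia). ring.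
Qed.

Lemma active_sum_ge t a b m : (t <= a)%nat -> (forall j, (a <= j)%nat -> (t <= k j)%nat) ->
  (a + b <= m)%nat ->
  lmin * En t * q ^ (a - t) * rsum b (fun d => q ^ d) <= active_sum t m.
Proof.
  intros Hta Hk Hm. pose proof q_bounds. pose proof lmin_pos. pose proof (En_nonneg t).
  apply Rle_trans with (rsum (a + b) (fun j => from_ind a j * (lmin * (q ^ (j - t) * En t)))).
  - rewrite from_ind_sum, <- !rsum_scal. apply rsum_le. intros d Hd.
    replace (a + d - t)%nat with ((a - t) + d)%nat by lia. rewrite pow_add. right. ring.
  - apply Rle_trans with (rsum (a + b) (fun j => from_ind t j * resid_k j)).
    + apply rsum_le. intros j Hj. unfold from_ind.
      destruct (Nat.leb a j) eqn:E1.
      * apply Nat.leb_le in E1.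
        replace (Nat.leb t j) with true by (symmetry; apply Nat.leb_le; lia).
        pose proof (resid_k_ge t j (Hk j E1)). lra.
      * pose proof (resid_k_nonneg j). destruct (Nat.leb t j); lra.
    + unfold active_sum. apply rsum_extend; [lia|reflexivity|].
      intros j _. pose proof (from_ind_nonneg t j). pose proof (resid_k_nonneg j). nra.
Qed.

Lemma before_ind_count t m : rsum m (fun l => before_ind t l) = INR (Nat.min m t - (t - tau)).
Proof.
  induction m; [reflexivity|].
  simpl rsum. rewrite IHm. unfold before_ind.
  destruct (Nat.ltb m t) eqn:E1; destruct (Nat.leb t (m + tau)) eqn:E2; cbn [andb];
    apply Nat.ltb_lt in E1 || apply Nat.ltb_ge in E1;
    apply Nat.leb_le in E2 || apply Nat.leb_gt in E2.
  - replace (Nat.min (S m) t - (t - tau))%nat with (S (Nat.min m t - (t - tau))) by lia.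
    rewrite S_INR. ring.
  - all: replace (Nat.min (S m) t - (t - tau))%nat with (Nat.min m t - (t - tau))%nat
      by lia; ring.
Qed.

(* Each of the at most tau residuals just before t is read at a time
   >= t - 2 tau, so it is at most lmax E_t / q^(2 tau). *)
Lemma before_sum_le t m : before_sum t m <= INR tau * (lmax * En t / q ^ (2 * tau)).
Proof.
  pose proof q_bounds as [Hq0 Hq1]. pose proof lmax_pos. pose proof (En_nonneg t).
  assert (Hq2 : 0 < q ^ (2 * tau)) by (apply pow_lt; lra).
  set (B := lmax * En t / q ^ (2 * tau)).
  assert (HB : 0 <= B) by (unfold B; apply Rdiv_le_0_compat; nra).
  apply Rle_trans with (rsum m (fun l => before_ind t l * B)).
  - apply rsum_le. intros l Hl. unfold before_ind.
    destruct (Nat.ltb l t) eqn:E1; destruct (Nat.leb t (l + tau)) eqn:E2; simpl;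
      try (pose proof (resid_k_nonneg l); lra).
    apply Nat.ltb_lt in E1. apply Nat.leb_le in E2.
    rewrite !Rmult_1_l. unfold resid_k.
    pose proof (resid_le (k l)). pose proof (k_window l) as [Hk1 Hk2].
    pose proof (En_geometric_ge (k l) (t - k l)) as HE.
    replace (k l + (t - k l))%nat with t in HE by lia.
    assert (q ^ (2 * tau) <= q ^ (t - k l)) by (apply pow_antitone; [lra|lia]).
    pose proof (En_nonneg (k l)).
    assert (q ^ (2 * tau) * En (k l) <= En t) by nra.
    assert (En (k l) <= En t / q ^ (2 * tau)).
    { apply Rmult_le_reg_l with (q ^ (2 * tau)); [lra|].
      unfold Rdiv. replace (q ^ (2 * tau) * (En t * / q ^ (2 * tau))) with (En t)
        by (field; lra). lra. }
    unfold B. unfold Rdiv in *.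
    assert (lmax * En (k l) <= lmax * (En t * / q ^ (2 * tau))) by (apply Rmult_le_compat_l; lra).
    lra.
  - rewrite (rsum_ext m _ (fun l => B * before_ind t l)) by (intros; ring).
    rewrite rsum_scal, before_ind_count.
    assert (INR (Nat.min m t - (t - tau)) <= INR tau) by (apply le_INR; lia).
    nra.
Qed.

Lemma geometric_sum_ge b : q ^ b <= 1 / 2 -> INR n / (2 * lmax) <= rsum b (fun d => q ^ d).
Proof.
  intros Hb. pose proof (geometric_sum q b) as Hg. pose proof q_bounds. pose proof lmax_pos.
  replace (1 - q) with (lmax / INR n) in Hg by (unfold q; ring).
  apply Rmult_le_reg_r with (lmax / INR n); [apply Rdiv_lt_0_compat; lra|].
  rewrite Hg. replace (INR n / (2 * lmax) * (lmax / INR n)) with (1 / 2) by (field; lra).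
  lra.
Qed.

Hypothesis small_delay : 2 * rho * INR tau < 1.

Lemma nu_bounds : 0 <= nu <= 1.
Proof. pose proof rho_nonneg. pose proof (pos_INR tau). unfold nu. nra. Qed.

(* Part (a): from time 0 no delayed read looks before the window. *)
Lemma En_first_window m : q ^ m <= 1 / 2 ->
  En m <= (1 - nu / (2 * (lmax / lmin))) * En 0.
Proof.
  intros Hqm. pose proof (En_window 0 m (Nat.le_0_l m)) as HW.
  assert (HP : before_sum 0 m = 0).
  { unfold before_sum. rewrite (rsum_ext m _ (fun _ => 0)); [rewrite rsum_const; ring|].
    intros l _. unfold before_ind.
    replace (Nat.ltb l 0) with false by (symmetry; apply Nat.ltb_ge; lia). simpl. ring. }
  rewrite HP in HW.
  pose proof (active_sum_ge 0 0 m m (le_n 0) (fun j _ => Nat.le_0_l (k j)) (le_n m)) as HS.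
  simpl in HS. pose proof (geometric_sum_ge m Hqm) as HG.
  pose proof lmin_pos. pose proof lmax_pos. pose proof (En_nonneg 0). pose proof nu_bounds.
  set (Gs := rsum m (fun d => q ^ d)) in *.
  assert (HH1 : lmin * En 0 * (INR n / (2 * lmax)) <= lmin * En 0 * 1 * Gs).
  { rewrite Rmult_1_r. apply Rmult_le_compat_l; [nra|exact HG]. }
  assert (HH2 : nu / INR n * (lmin * En 0 * (INR n / (2 * lmax))) <= nu / INR n * active_sum 0 m).
  { apply Rmult_le_compat_l; [apply Rdiv_le_0_compat; lra| lra]. }
  replace ((1 - nu / (2 * (lmax / lmin))) * En 0) with
    (En 0 - nu / INR n * (lmin * En 0 * (INR n / (2 * lmax)))) by (field; lra).
  lra.
Qed.

Definition chi : R := rho * INR tau ^ 2 * lmax * / (q ^ (2 * tau)) / INR n.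

(* One block of length tau + T0 starting at t: the first tau steps flush the
   delays, the next T0 steps contract E_t by the factor
   1 - nu q^tau / (2 kappa) + chi. *)
Lemma En_block t m T0 : q ^ T0 <= 1 / 2 -> (t + tau + T0 <= m)%nat ->
  En m <= (1 - nu * q ^ tau / (2 * (lmax / lmin)) + chi) * En t.
Proof.
  intros HqT Hm. pose proof (En_window t m ltac:(lia)) as HW.
  pose proof (active_sum_ge t (t + tau) T0 m ltac:(lia)
     (fun j Hj => ltac:(pose proof (k_window j); lia)) Hm) as HS.
  replace (t + tau - t)%nat with tau in HS by lia.
  pose proof (geometric_sum_ge T0 HqT) as HG. pose proof (before_sum_le t m) as HP.
  pose proof lmin_pos. pose proof lmax_pos. pose proof (En_nonneg t).
  pose proof q_bounds as [Hq0 Hq1].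
  assert (Hqt : 0 < q ^ tau) by (apply pow_lt; lra).
  assert (Hq2 : 0 < q ^ (2 * tau)) by (apply pow_lt; lra).
  pose proof nu_bounds. pose proof rho_nonneg. pose proof (pos_INR tau).
  set (Gs := rsum T0 (fun d => q ^ d)) in *.
  assert (HH1 : lmin * En t * q ^ tau * (INR n / (2 * lmax)) <= lmin * En t * q ^ tau * Gs).
  { apply Rmult_le_compat_l; [|exact HG]. apply Rmult_le_pos; [nra|lra]. }
  assert (HH2 : nu / INR n * (lmin * En t * q ^ tau * (INR n / (2 * lmax)))
                <= nu / INR n * active_sum t m).
  { apply Rmult_le_compat_l; [apply Rdiv_le_0_compat; lra| lra]. }
  assert (HH3 : rho * INR tau / INR n * before_sum t m <=
               rho * INR tau / INR n * (INR tau * (lmax * En t / q ^ (2 * tau)))).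
  { apply Rmult_le_compat_l; [apply Rdiv_le_0_compat; [nra|lra]|exact HP]. }
  replace ((1 - nu * q ^ tau / (2 * (lmax / lmin)) + chi) * En t)
    with (En t - nu / INR n * (lmin * En t * q ^ tau * (INR n / (2 * lmax)))
          + rho * INR tau / INR n * (INR tau * (lmax * En t / q ^ (2 * tau))))
    by (unfold chi; field; repeat split; lra).
  lra.
Qed.

Lemma block_factor_nonneg : 0 <= 1 - nu * q ^ tau / (2 * (lmax / lmin)) + chi.
Proof.
  pose proof lmin_pos. pose proof lmax_pos. pose proof lmin_le_lmax.
  pose proof q_bounds as [Hq0 Hq1]. pose proof nu_bounds. pose proof rho_nonneg.
  pose proof (pos_INR tau).
  assert (Hqt0 : 0 < q ^ tau) by (apply pow_lt; lra).
  assert (Hqt1 : q ^ tau <= 1) by (apply pow_le1; lra).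
  assert (Hq2 : 0 < q ^ (2 * tau)) by (apply pow_lt; lra).
  assert (0 <= chi).
  { unfold chi. apply Rdiv_le_0_compat; [|lra].
    apply Rmult_le_pos; [|left; apply Rinv_0_lt_compat; lra].
    apply Rmult_le_pos; [apply Rmult_le_pos; [lra | apply pow_le; lra] | lra]. }
  assert (nu * q ^ tau / (2 * (lmax / lmin)) <= 1 / 2).
  { replace (nu * q ^ tau / (2 * (lmax / lmin))) with (nu * q ^ tau * lmin / (2 * lmax))
      by (field; lra).
    apply Rmult_le_reg_r with (2 * lmax); [lra|].
    replace (nu * q ^ tau * lmin / (2 * lmax) * (2 * lmax)) with (nu * q ^ tau * lmin)
      by (field; lra).
    assert (Hnq : nu * q ^ tau <= 1) by nra.
    assert (0 <= lmin) by lra.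
    pose proof (Rmult_le_compat_r lmin _ _ ltac:(assumption) Hnq). lra. }
  lra.
Qed.

Lemma En_blocks T0 r m : q ^ T0 <= 1 / 2 -> (1 <= r)%nat -> (r * (T0 + tau) <= m)%nat ->
  En m <= (1 - nu / (2 * (lmax / lmin)))
          * (1 - nu * q ^ tau / (2 * (lmax / lmin)) + chi) ^ (r - 1) * En 0.
Proof.
  intros HqT Hr. destruct r as [|r]; [lia|]. replace (S r - 1)%nat with r by lia.
  pose proof q_bounds. pose proof block_factor_nonneg.
  revert m. induction r as [|r IH]; intros m Hm.
  - rewrite pow_O, Rmult_1_r. apply En_first_window.
    eapply Rle_trans; [apply pow_antitone; [lra|] | exact HqT]. lia.
  - pose proof (IH ltac:(lia) (m - (T0 + tau))%nat ltac:(nia)) as Hprev.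
    eapply Rle_trans; [apply (En_block (m - (T0 + tau)) m T0 HqT); nia|].
    rewrite <- tech_pow_Rmult.
    replace (_ * (_ * _) * En 0) with ((1 - nu * q ^ tau / (2 * (lmax / lmin)) + chi) *
      ((1 - nu / (2 * (lmax / lmin))) *
       (1 - nu * q ^ tau / (2 * (lmax / lmin)) + chi) ^ r * En 0)) by ring.
    apply Rmult_le_compat_l; assumption.
Qed.
End Process.
End SymmetricPositiveDefinite.

Lemma log_ratio_pos q : 0 < q < 1 -> 0 < ln (1 / 2) / ln q.
Proof.
  intros [Hq0 Hq1].
  assert (ln q < 0) by (rewrite <- ln_1; apply ln_increasing; lra).
  assert (ln (1 / 2) < 0) by (rewrite <- ln_1; apply ln_increasing; lra).
  assert (/ ln q < 0) by (apply Rinv_lt_0_compat; lra).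
  unfold Rdiv. nra.
Qed.

Lemma pow_le_half q m : 0 < q < 1 -> ln (1 / 2) / ln q <= INR m -> q ^ m <= 1 / 2.
Proof.
  intros [Hq0 Hq1] H.
  assert (Hl : ln q < 0) by (rewrite <- ln_1; apply ln_increasing; lra).
  assert (H2 : ln (q ^ m) <= ln (1 / 2)).
  { rewrite ln_pow by lra.
    replace (ln (1 / 2)) with (ln (1 / 2) / ln q * ln q) by (field; lra).
    apply Rmult_le_compat_neg_l with (r := ln q) in H; lra. }
  destruct (Rle_or_lt (q ^ m) (1 / 2)) as [Hle|Hlt]; [exact Hle|].
  assert (ln (1 / 2) < ln (q ^ m)) by (apply ln_increasing; lra). lra.
Qed.

Lemma Rceil_ge th : 0 < th -> th <= INR (Z.to_nat (Rceil th)).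
Proof.
  intros Hth. unfold Rceil. destruct (archimed (- th)) as [H1 H2].
  assert (Hz : th <= IZR (1 - up (- th))) by (rewrite minus_IZR; lra).
  assert (Hz0 : (0 <= 1 - up (- th))%Z) by (apply le_IZR; lra).
  rewrite INR_IZR_INZ, Z2Nat.id by exact Hz0. exact Hz.
Qed.

Theorem theorem1
  (n : nat) (hn : (2 <= n)%nat)
  (A : nat -> nat -> R)
  (hsym : forall i j, (i < n)%nat -> (j < n)%nat -> A i j = A j i)
  (hpd : forall v : nat -> R, (exists i, (i < n)%nat /\ v i <> 0) -> 0 < normA2 n A v)
  (hdiag : forall i, (i < n)%nat -> A i i = 1)
  (b xstar : nat -> R)
  (hxstar : forall i, (i < n)%nat -> matvec n A xstar i = b i)
  (lmin lmax : R)
  (hlmin : is_eigenvalue n A lmin) (hlmax : is_eigenvalue n A lmax)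
  (hspec : forall lam, is_eigenvalue n A lam -> lmin <= lam <= lmax)
  (x0 : nat -> R) (tau : nat) (k : nat -> nat)
  (hk : forall j, (j <= k j + tau)%nat /\ (k j <= j)%nat) :
  let kappa := lmax / lmin in
  let rho := / INR n * norm_inf n A in
  let nu := 1 - 2 * rho * INR tau in
  let E := Em n A xstar x0 1 k in
  let q := 1 - lmax / INR n in
  2 * rho * INR tau < 1 ->
  (forall m : nat, ln (1 / 2) / ln q <= INR m ->
     E m <= (1 - nu / (2 * kappa)) * E O) /\
  (let T0 := Z.to_nat (Rceil (ln (1 / 2) / ln q)) in
   let T := (T0 + tau)%nat in
   let chi := rho * INR tau ^ 2 * lmax * / (q ^ (2 * tau)) / INR n in
   forall r m : nat, (1 <= r)%nat -> (r * T <= m)%nat ->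
     E m <= (1 - nu / (2 * kappa))
            * (1 - nu * q ^ tau / (2 * kappa) + chi) ^ (r - 1) * E O).
Proof.
  intros kappa rho nu E q small_delay.
  pose proof (q_bounds n A hsym hpd lmin lmax hlmin hlmax hspec hdiag hn) as Hq.
  split.
  - intros m Hm.
    apply (En_first_window n A hsym hpd lmin lmax hlmin hlmax hspec hdiag hn
             xstar x0 k tau hk small_delay m).
    exact (pow_le_half q m Hq Hm).
  - intros T0 T chi r m Hr Hm.
    apply (En_blocks n A hsym hpd lmin lmax hlmin hlmax hspec hdiag hn
             xstar x0 k tau hk small_delay T0 r m); [|exact Hr|exact Hm].
    apply pow_le_half; [exact Hq|]. apply Rceil_ge, log_ratio_pos, Hq.
Qed.
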